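(* Let $q$ be a prime power and $t\ge 1$ an integer. In a projective space over $\mathbb{F}_q$, let $\Omega$ be a $(t-2)$-dimensional subspace, $\Gamma$ a plane skew from $\Omega$, $\Pi=\langle\Omega,\Gamma\rangle$, $\bar{B}$ a small minimal blocking set of $\Gamma$, and $K$ the cone with vertex $\Omega$ and base $\bar{B}$. Then every plane $\pi$ of $\Pi$ meets $K$ either in the whole plane $\pi$, or in a union of lines through a fixed point, or in a minimal blocking set of $\pi$ that is projectively equivalent to $\bar{B}$.
   Context: The cone with vertex $\Omega$ and base $\bar{B}$ is $\bigcup_{P\in\bar B}\langle P,\Omega\rangle$. A blocking set of a plane over $\mathbb{F}_q$ is a point set meeting every line; minimal means no proper subset does; small means fewer than $3(q+1)/2$ points. *)

(* Projective geometry over a finite field F (= F_q, q = #|F|)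
   modelled inside the vector space F^n (row vectors):
   a projective subspace of projective dimension d is the row space of a square
   matrix A : 'M[F]_n with \rank A = d+1; incidence is row-space inclusion
   (A <= B)%MS; the span <A,B> is (A + B)%MS.  Points are represented
   canonically by the rank-1 matrices A with <<A>> = A, so that point sets are
   finite sets {set 'M[F]_n}. *)
From HB Require Import structures.
From mathcomp Require Import all_boot all_order all_algebra.

Set Implicit Arguments.
Unset Strict Implicit.
Unset Printing Implicit Defensive.

Import GRing.Theory.
Local Open Scope ring_scope.

Section ProjGeom.
Variables (F : finFieldType) (n : nat).

Definition points : {set 'M[F]_n} :=
  [set A : 'M[F]_n | (<<A>>%MS == A) && (\rank A == 1%N)].

Definition pts_of (S : 'M[F]_n) : {set 'M[F]_n} :=
  [set P in points | (P <= S)%MS].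

Definition blocking_set (G : 'M[F]_n) (B : {set 'M[F]_n}) : Prop :=
  B \subset pts_of G /\
  (forall L : 'M[F]_n, \rank L = 2%N -> (L <= G)%MS ->
     exists2 P, P \in B & (P <= L)%MS).

Definition minimal_blocking_set (G : 'M[F]_n) (B : {set 'M[F]_n}) : Prop :=
  blocking_set G B /\ (forall B' : {set 'M[F]_n}, B' \proper B -> ~ blocking_set G B').

Definition small_set (B : {set 'M[F]_n}) : Prop :=
  (2 * #|B| < 3 * (#|F| + 1))%N.

Definition cone (Om : 'M[F]_n) (B : {set 'M[F]_n}) : {set 'M[F]_n} :=
  [set P in points | [exists Pb in B, (P <= Om + Pb)%MS]].

Definition union_of_lines_through_point (pi : 'M[F]_n) (X : {set 'M[F]_n}) : Prop :=
  exists2 R, R \in pts_of pi &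
  exists Ls : {set 'M[F]_n},
    [/\ Ls != set0,
        (forall l, l \in Ls -> [/\ \rank l = 2%N, (l <= pi)%MS & (R <= l)%MS]) &
        X = [set P in points | [exists l in Ls, (P <= l)%MS]]].

Definition proj_equiv (X Y : {set 'M[F]_n}) : Prop :=
  exists2 M : 'M[F]_n, M \in unitmx & Y = [set <<P *m M>>%MS | P in X].

End ProjGeom.

(* If pi is skew to the vertex Om, the projection from Om onto Ga is injective
   on pi, so it extends to a collineation; this collineation maps each point of
   the cone in pi to its base point, hence pi meets the cone in a copy of Bb.
   If pi meets Om in a point R, the cone is closed under joining with R, and a
   generator <Om, P> meeting pi in a line (found by blocking the line
   <Om, pi> :&: Ga when pi :&: Om is a point) supplies a cone point of pi other
   than R; so pi meets the cone in a union of lines through R.  Neither the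
   smallness of Bb nor the dimension of Om plays a role. *)

From HB Require Import structures.
From mathcomp Require Import all_boot all_order all_algebra.
From mathcomp Require Import zify.

Set Implicit Arguments.
Unset Strict Implicit.
Unset Printing Implicit Defensive.

Import GRing.Theory.
Local Open Scope ring_scope.

Lemma mxrank_proj_mx_compl (F : fieldType) m n (U V : 'M[F]_n) (W : 'M[F]_(m, n)) :
  (W <= U + V)%MS -> (W :&: V = 0)%MS -> \rank (W *m proj_mx U V) = \rank W.
Proof.
move=> WUV WV0; set p := proj_mx U V.
rewrite -[RHS](mxrank_mul_ker W p).
suff -> : (W :&: kermx p = 0)%MS by rewrite mxrank0 addn0.
apply/eqP; rewrite -submx0 -WV0 sub_capmx capmxSl /=.
set K := (W :&: kermx p)%MS; have Kp0 : K *m p = 0 by apply/sub_kermxP/capmxSr.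
have := @proj_mx_compl_sub _ _ _ U V K; rewrite Kp0 subr0; apply.
exact: submx_trans (capmxSl _ _) WUV.
Qed.

Section Points.
Variables (F : finFieldType) (n : nat).
Implicit Types (P R : 'M[F]_n).
Local Notation points := (points F n).

Lemma pointP P : P \in points -> <<P>>%MS = P /\ \rank P = 1%N.
Proof. by rewrite inE => /andP[/eqP -> /eqP ->]. Qed.

Lemma genmx_point m (v : 'M[F]_(m, n)) : \rank v = 1%N -> <<v>>%MS \in points.
Proof. by move=> rv; rewrite inE genmx_id eqxx mxrank_gen rv. Qed.

Lemma point_sub_eq P R : P \in points -> R \in points -> (P <= R)%MS -> P = R.
Proof.
move=> /pointP[gP rP] /pointP[gR rR] sPR.
have [_ sRP] := mxrank_leqif_sup sPR.
by rewrite -gP -gR; apply/genmxP; rewrite sPR -sRP rP rR.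
Qed.

Lemma exists_point m1 m2 (S : 'M[F]_(m1, n)) (T : 'M[F]_(m2, n)) :
  ~~ (S <= T)%MS -> exists P, [/\ P \in points, (P <= S)%MS & ~~ (P <= T)%MS].
Proof.
case/row_subPn => i nST.
have nz : row i S != 0 by apply: contraNneq nST => ->; rewrite sub0mx.
exists <<row i S>>%MS; split; rewrite ?genmxE ?row_sub //.
by apply: genmx_point; apply/eqP; rewrite eqn_leq rank_leq_row lt0n mxrank_eq0.
Qed.

Lemma rank_join_points P R : P \in points -> R \in points -> ~~ (P <= R)%MS ->
  \rank (R + P)%MS = 2%N.
Proof.
move=> /pointP[_ rP] /pointP[_ rR] nPR.
have [le _] := mxrank_adds_leqif R P.
have : (R < R + P)%MS by rewrite ltmxE addsmxSl addsmx_sub submx_refl.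
by move/rank_ltmx; move: le; rewrite rP rR; lia.
Qed.

Lemma exists_line m (S : 'M[F]_(m, n)) : (2 <= \rank S)%N ->
  exists2 L : 'M[F]_n, \rank L = 2%N & (L <= S)%MS.
Proof.
move=> rS.
have [P1 [p1 s1 _]] : exists P, [/\ P \in points, (P <= S)%MS & ~~ (P <= (0 : 'M_n))%MS].
  by apply: exists_point; rewrite submx0 -mxrank_eq0; lia.
have [P2 [p2 s2 n2]] : exists P, [/\ P \in points, (P <= S)%MS & ~~ (P <= P1)%MS].
  by apply: exists_point; apply: contraTN rS => /mxrankS; case: (pointP p1) => _ ->; lia.
by exists (P1 + P2)%MS; [apply: rank_join_points | rewrite addsmx_sub s1 s2].
Qed.

Lemma in_pts_of P S : (P \in pts_of S) = (P \in points) && (P <= S)%MS.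
Proof. by rewrite /pts_of !inE. Qed.

End Points.

Section Collineations.
Variables (F : finFieldType) (n : nat).
Implicit Types (M G H : 'M[F]_n) (B : {set 'M[F]_n}).
Local Notation points := (points F n).

Definition pt_image M B : {set 'M[F]_n} := [set <<P *m M>>%MS | P in B].

Lemma genmx_mulmx m p (A : 'M[F]_(m, n)) (M : 'M[F]_(n, p)) :
  <<<<A>>%MS *m M>>%MS = <<A *m M>>%MS.
Proof. exact/eq_genmx/eqmxMr/genmxE. Qed.

Lemma pt_imageM M N B : pt_image N (pt_image M B) = pt_image (M *m N) B.
Proof.
by rewrite /pt_image -imset_comp; apply: eq_imset => P /=; rewrite genmx_mulmx mulmxA.
Qed.

Lemma pt_image1 B : B \subset points -> pt_image 1%:M B = B.
Proof.
move=> /subsetP sB; rewrite -[RHS]imset_id; apply: eq_in_imset => P /sB /pointP[gP _].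
by rewrite mulmx1 gP.
Qed.

Lemma pt_image_point M P : M \in unitmx -> P \in points -> <<P *m M>>%MS \in points.
Proof.
by move=> uM /pointP[_ rP]; apply: genmx_point; rewrite mxrankMfree ?row_free_unit.
Qed.

Lemma mem_pt_image M B x : M \in unitmx -> B \subset points ->
  (x \in pt_image M B) = (x \in points) && (<<x *m invmx M>>%MS \in B).
Proof.
move=> uM /subsetP sB; apply/imsetP/andP => [[P PB ->] | [px xB]].
  split; first exact/pt_image_point/sB.
  by rewrite genmx_mulmx mulmxK //; case: (pointP (sB _ PB)) => ->.
exists <<x *m invmx M>>%MS => //.
by rewrite genmx_mulmx mulmxKV //; case: (pointP px).
Qed.

Lemma blocking_set_image M G H B : M \in unitmx -> (G *m M :=: H)%MS ->
  blocking_set G B -> blocking_set H (pt_image M B).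
Proof.
move=> uM GMH [sBG blockB]; split.
  apply/subsetP => _ /imsetP[P PB ->].
  have := subsetP sBG _ PB; rewrite !in_pts_of => /andP[pP PG].
  by rewrite pt_image_point // genmxE -GMH submxMr.
move=> L rL LH; have [||] := blockB (L *m invmx M).
- by rewrite mxrankMfree ?row_free_unit ?unitmx_inv.
- by rewrite -[G](mulmxK uM); apply: submxMr; rewrite GMH.
move=> P PB PL; exists <<P *m M>>%MS; first exact: imset_f.
by rewrite genmxE -[L](mulmxKV uM) submxMr.
Qed.

Lemma blocking_set_points G B : blocking_set G B -> B \subset points.
Proof.
by case=> /subsetP sBG _; apply/subsetP => P /sBG; rewrite in_pts_of => /andP[].
Qed.

Lemma minimal_blocking_set_image M G H B : M \in unitmx -> (G *m M :=: H)%MS ->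
  minimal_blocking_set G B -> minimal_blocking_set H (pt_image M B).
Proof.
move=> uM GMH [blockB minB]; split; first exact: blocking_set_image blockB.
move=> B' /properP[sB'MB [Q QMB nB'Q]] blockB'.
have HMG : (H *m invmx M :=: G)%MS.
  by have := eqmxMr (invmx M) (eqmx_sym GMH); rewrite mulmxK.
have pt_imageK : pt_image (invmx M) (pt_image M B) = B.
  by rewrite pt_imageM mulmxV // pt_image1 // (blocking_set_points blockB).
apply: (minB (pt_image (invmx M) B')); last first.
  by apply: blocking_set_image HMG blockB'; rewrite unitmx_inv.
apply/properP; split; first by rewrite -pt_imageK; apply: imsetS.
have pt_imageK' : pt_image M (pt_image (invmx M) B') = B'.
  by rewrite pt_imageM mulVmx // pt_image1 // (blocking_set_points blockB').
case/imsetP: QMB nB'Q => P PB -> nB'P; exists P => //.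
by apply: contra nB'P => PB'; rewrite -pt_imageK'; apply: imset_f.
Qed.
End Collineations.

Section Cone.
Variables (F : finFieldType) (n : nat).
Implicit Types (Om Ga pi P R x : 'M[F]_n) (B X : {set 'M[F]_n}).
Local Notation points := (points F n).

Lemma in_cone Om B P :
  (P \in cone Om B) = (P \in points) && [exists Pb in B, P <= Om + Pb]%MS.
Proof. by rewrite /cone !inE. Qed.

Lemma cone_join_vertex Om B R P x : (R <= Om)%MS -> P \in cone Om B ->
  x \in points -> (x <= R + P)%MS -> x \in cone Om B.
Proof.
rewrite !in_cone => ROm /andP[_ /exists_inP[Pb PbB POmPb]] px xRP.
rewrite px; apply/exists_inP; exists Pb => //; apply: submx_trans xRP _.
by rewrite addsmx_sub POmPb (submx_trans ROm (addsmxSl _ _)).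
Qed.

Lemma mem_cone_proj Om Ga B P : (Om :&: Ga = 0)%MS -> B \subset pts_of Ga ->
  P \in points -> (P <= Om + Ga)%MS -> ~~ (P <= Om)%MS ->
  (P \in cone Om B) = (<<P *m proj_mx Ga Om>>%MS \in B).
Proof.
move=> OmGa0 sBGa pP POmGa nPOm; set p := proj_mx Ga Om.
have GaOm0 : (Ga :&: Om = 0)%MS by rewrite capmxC.
have POm_p : (P - P *m p <= Om)%MS by apply: proj_mx_compl_sub; rewrite addsmxC.
have pPp : <<P *m p>>%MS \in points.
  apply: genmx_point; apply/eqP; rewrite eqn_leq -{1}(proj2 (pointP pP)) mxrankM_maxl.
  rewrite lt0n mxrank_eq0; apply: contra nPOm => /eqP Pp0.
  by rewrite -[P]subr0 -Pp0.
rewrite in_cone pP; apply/exists_inP/idP => [[Pb PbB POmPb] | PpB].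
  have /andP[pPb PbGa] : (Pb \in points) && (Pb <= Ga)%MS.
    by rewrite -in_pts_of (subsetP sBGa).
  suff -> : <<P *m p>>%MS = Pb by [].
  apply: point_sub_eq => //; rewrite genmxE; apply: submx_trans (submxMr p POmPb) _.
  by rewrite addsmxMr (proj_mx_0 GaOm0 (submx_refl Om)) (proj_mx_id GaOm0 PbGa) adds0mx.
exists <<P *m p>>%MS => //.
by rewrite -{1}[P](subrK (P *m p)) addmx_sub_adds // genmxE.
Qed.

Lemma cone_cap_skew_plane Om Ga pi B :
  (Om :&: Ga = 0)%MS -> B \subset pts_of Ga ->
  \rank pi = \rank Ga -> (pi <= Om + Ga)%MS -> (pi :&: Om = 0)%MS ->
  exists2 M, M \in unitmx &
    (Ga *m M :=: pi)%MS /\ cone Om B :&: pts_of pi = pt_image M B.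
Proof.
move=> OmGa0 sBGa rpi piOmGa piOm0; set p := proj_mx Ga Om.
have [g ug pi_pg] : {g | g \in unitmx & pi *m p = pi *m g}.
  by apply: complete_unitmx; rewrite mxrank_proj_mx_compl // addsmxC.
have g_p x : (x <= pi)%MS -> x *m g = x *m p.
  by case/submxP => D ->; rewrite -!mulmxA pi_pg.
have pig_Ga : (pi *m g :=: Ga)%MS.
  have sGa : (pi *m g <= Ga)%MS by rewrite -pi_pg proj_mx_sub.
  by apply/eqmxP; rewrite -(mxrank_leqif_eq sGa) mxrankMfree ?row_free_unit ?rpi.
have ptsB : B \subset points.
  by apply/subsetP => P /(subsetP sBGa); rewrite in_pts_of => /andP[].
exists (invmx g); first by rewrite unitmx_inv.
split; first by have := eqmxMr (invmx g) (eqmx_sym pig_Ga); rewrite mulmxK.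
apply/setP => x; rewrite in_setI in_pts_of mem_pt_image ?unitmx_inv ?invmxK //.
have [px /=|] := boolP (x \in points); last by rewrite andbF.
have [xpi|nxpi] := boolP (x <= pi)%MS; rewrite ?andbT ?andbF.
  have nxOm : ~~ (x <= Om)%MS.
    apply/negP => xOm; have := proj2 (pointP px).
    have : (x <= pi :&: Om)%MS by rewrite sub_capmx xpi xOm.
    by rewrite piOm0 submx0 => /eqP ->; rewrite mxrank0.
  by rewrite (mem_cone_proj OmGa0 sBGa) ?g_p // (submx_trans xpi).
apply/esym/negbTE; apply: contra nxpi => xgB.
have /andP[_ xgGa] : (<<x *m g>>%MS \in points) && (<<x *m g>> <= Ga)%MS.
  by rewrite -in_pts_of (subsetP sBGa).
by rewrite -(submxMfree _ _ (_ : row_free g)) ?row_free_unit // pig_Ga -genmxE.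
Qed.

Lemma union_of_lines_through_join_closed pi X R Q :
  X \subset pts_of pi -> R \in pts_of pi -> Q \in X -> Q != R ->
  (forall P x, P \in X -> x \in points -> (x <= R + P)%MS -> x \in X) ->
  union_of_lines_through_point pi X.
Proof.
move=> sXpi Rpi QX QR closedX.
have ptsX P : P \in X -> (P \in points) && (P <= pi)%MS.
  by move/(subsetP sXpi); rewrite in_pts_of.
have /andP[pR Rsubpi] : (R \in points) && (R <= pi)%MS by rewrite -in_pts_of.
have RQ_line : <<(R + Q)%MS>>%MS \in [set <<(R + P)%MS>>%MS | P in X :\ R].
  by apply: imset_f; rewrite in_setD1 QR QX.
exists R => //; exists [set <<(R + P)%MS>>%MS | P in X :\ R]; split.
- by apply/set0Pn; exists <<(R + Q)%MS>>%MS.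
- move=> _ /imsetP[P /setD1P[PR PX] ->]; have /andP[pP Ppi] := ptsX P PX.
  split; rewrite ?genmxE ?addsmxSl ?addsmx_sub ?Rsubpi //.
  apply: rank_join_points => //; apply: contra PR => PR.
  by apply/eqP/point_sub_eq.
apply/setP => x; rewrite inE; apply/idP/andP => [xX | [px]].
  have /andP[px _] := ptsX x xX; split => //; apply/exists_inP.
  have [->|xR] := eqVneq x R.
    by exists <<(R + Q)%MS>>%MS; rewrite ?genmxE ?addsmxSl.
  exists <<(R + x)%MS>>%MS; last by rewrite genmxE addsmxSr.
  by apply: imset_f; rewrite in_setD1 xR xX.
case/exists_inP => _ /imsetP[P /setD1P[_ PX] ->]; rewrite genmxE.
exact: closedX.
Qed.

Lemma exists_cone_generator_cap_line Om Ga pi B :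
  (Om :&: Ga = 0)%MS -> \rank Ga = 3%N -> blocking_set Ga B ->
  \rank pi = 3%N -> (pi <= Om + Ga)%MS -> \rank (pi :&: Om)%MS != 0%N ->
  exists2 Pb, Pb \in B & (2 <= \rank (pi :&: (Om + Pb)))%N.
Proof.
move=> OmGa0 rGa [sBGa blockB] rpi piOmGa rpiOm; set o := \rank Om.
have rOmGa : \rank (Om + Ga)%MS = (o + 3)%N.
  by have := mxrank_sum_cap Om Ga; rewrite OmGa0 mxrank0 rGa; lia.
have [r2|r1] := leqP 2 (\rank (pi :&: Om)%MS).
  have [L rL LGa] : exists2 L : 'M_n, \rank L = 2%N & (L <= Ga)%MS.
    by apply: exists_line; rewrite rGa.
  have [Pb PbB _] := blockB L rL LGa; exists Pb => //.
  by apply: leq_trans r2 (mxrankS _); rewrite capmxS ?addsmxSl.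
have {r1 rpiOm}rpiOm1 : \rank (pi :&: Om)%MS = 1%N by lia.
have rOmpi : \rank (Om + pi)%MS = (o + 2)%N.
  by have := mxrank_sum_cap Om pi; rewrite capmxC rpiOm1 rpi; lia.
have rOmpiGa : \rank (Om + pi + Ga)%MS = (o + 3)%N.
  rewrite -rOmGa; apply: eqmx_rank; apply/andP; split.
    by rewrite !addsmx_sub addsmxSl piOmGa addsmxSr.
  by rewrite addsmxS ?addsmxSl.
have [Pb PbB PbW] : exists2 Pb, Pb \in B & (Pb <= (Om + pi) :&: Ga)%MS.
  by apply: blockB (capmxSr _ _); have := mxrank_sum_cap (Om + pi)%MS Ga; lia.
exists Pb => //; move: PbW; rewrite sub_capmx => /andP[PbOmpi PbGa].
have /andP[pPb _] : (Pb \in points) && (Pb <= Ga)%MS.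
  by rewrite -in_pts_of (subsetP sBGa).
have rOmPb : \rank (Om + Pb)%MS = (o + 1)%N.
  have OmPb0 : (Om :&: Pb = 0)%MS by apply/eqP; rewrite -submx0 -OmGa0 capmxS.
  by have := mxrank_sum_cap Om Pb; rewrite OmPb0 mxrank0 (proj2 (pointP pPb)); lia.
have : (\rank (pi + (Om + Pb))%MS <= o + 2)%N.
  by rewrite -rOmpi mxrankS // !addsmx_sub addsmxSr addsmxSl PbOmpi.
by have := mxrank_sum_cap pi (Om + Pb)%MS; rewrite rpi rOmPb; lia.
Qed.

Lemma cone_cap_nonskew_plane Om Ga pi B :
  (Om :&: Ga = 0)%MS -> \rank Ga = 3%N -> blocking_set Ga B ->
  \rank pi = 3%N -> (pi <= Om + Ga)%MS -> \rank (pi :&: Om)%MS != 0%N ->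
  union_of_lines_through_point pi (cone Om B :&: pts_of pi).
Proof.
move=> OmGa0 rGa blockB rpi piOmGa rpiOm.
have [Pb PbB rpiOmPb] :=
  exists_cone_generator_cap_line OmGa0 rGa blockB rpi piOmGa rpiOm.
have [R [pR RpiOm _]] :
    exists R, [/\ R \in points, (R <= pi :&: Om)%MS & ~~ (R <= (0 : 'M_n))%MS].
  by apply: exists_point; rewrite submx0 -mxrank_eq0.
have [Q [pQ QpiOmPb nQR]] :
    exists Q, [/\ Q \in points, (Q <= pi :&: (Om + Pb))%MS & ~~ (Q <= R)%MS].
  apply: exists_point; apply: contraTN rpiOmPb => /mxrankS.
  by rewrite (proj2 (pointP pR)); lia.
move: RpiOm QpiOmPb; rewrite !sub_capmx => /andP[Rpi ROm] /andP[Qpi QOmPb].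
apply: (@union_of_lines_through_join_closed _ _ R Q); rewrite ?subsetIr ?in_pts_of ?pR //.
- by rewrite in_setI in_pts_of in_cone pQ Qpi /= andbT; apply/exists_inP; exists Pb.
- by apply: contraNneq nQR => ->.
move=> P x /setIP[Pcone /[!in_pts_of] /andP[_ Ppi]] px xRP.
rewrite in_setI in_pts_of px (cone_join_vertex ROm Pcone) //=.
by apply: submx_trans xRP _; rewrite addsmx_sub Rpi.
Qed.

End Cone.

Theorem lemma5p8 (F : finFieldType) (n t : nat) (Om Ga : 'M[F]_n)
    (Bb : {set 'M[F]_n}) :
  (1 <= t)%N ->
  \rank Om = t.-1 ->                       (* Om is (t-2)-dimensional *)
  \rank Ga = 3%N ->                        (* Ga is a plane *)
  \rank (Om :&: Ga)%MS = 0%N ->            (* Ga skew from Om *)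
  minimal_blocking_set Ga Bb -> small_set Bb ->
  forall pi : 'M[F]_n, \rank pi = 3%N -> (pi <= Om + Ga)%MS ->
    let X := cone Om Bb :&: pts_of pi in
    X = pts_of pi \/
    union_of_lines_through_point pi X \/
    (minimal_blocking_set pi X /\ proj_equiv Bb X).
Proof.
move=> _ _ rGa /eqP; rewrite mxrank_eq0 => /eqP OmGa0 minB _ pi rpi piOmGa X.
have [rpiOm|rpiOm] := eqVneq (\rank (pi :&: Om)%MS) 0%N; right.
  right; move/eqP: rpiOm; rewrite mxrank_eq0 => /eqP piOm0.
  have rpiGa : \rank pi = \rank Ga by rewrite rpi rGa.
  have [M uM [GaM_pi eX]] := cone_cap_skew_plane OmGa0 minB.1.1 rpiGa piOmGa piOm0.
  by rewrite /X eX; split; [apply: minimal_blocking_set_image minB | exists M].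
by left; apply: cone_cap_nonskew_plane OmGa0 rGa minB.1 rpi piOmGa rpiOm.
Qed.
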